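(* Let $n \geq 1$. There exist $6n+3$ products $P_1,\dots,P_{6n+3}$, each of the form $P_t = L_t M_t$ where $L_t$ and $M_t$ are $\mathbb{Z}$-linear combinations of the $3n+9$ indeterminates $a_{ij}$ ($1\le i\le n$, $1\le j\le 3$) and $b_{jk}$ ($1\le j,k\le 3$), such that for every $1\le i\le n$ and $1\le k\le 3$ the polynomial $\sum_{j=1}^3 a_{ij}b_{jk}$ is a $\mathbb{Z}$-linear combination of $P_1,\dots,P_{6n+3}$ in the commutative polynomial ring $\mathbb{Z}[a_{ij}, b_{jk}]$. Consequently, for every commutative ring $R$, every $n\times 3$ matrix $A=(a_{ij})$ over $R$ and every $3\times 3$ matrix $B=(b_{jk})$ over $R$, the product $AB$ can be computed using $6n+3$ multiplications.
   Context: ''The product can be computed using $k$ multiplications'' means: there are $k$ products, each a product of two linear forms with integer coefficients in the entries of $A$ and $B$ (the two factors may each involve entries of both $A$ and $B$; commutativity of $R$ may be used), such that every entry of $AB$ is an integer linear combination of these $k$ products, identically for all inputs. Additions, subtractions and multiplications by integer constants are not counted. *)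

From HB Require Import structures.
From mathcomp Require Import all_boot all_order all_algebra.
Set Implicit Arguments. Unset Strict Implicit. Unset Printing Implicit Defensive.
Import GRing.Theory.
Local Open Scope ring_scope.

Definition linform (R : comPzRingType) (n : nat)
  (A : 'M[R]_(n, 3)) (B : 'M[R]_3)
  (ca : 'I_n -> 'I_3 -> int) (cb : 'I_3 -> 'I_3 -> int) : R :=
  \sum_(i < n) \sum_(j < 3) A i j *~ ca i j
  + \sum_(j < 3) \sum_(k < 3) B j k *~ cb j k.

From HB Require Import structures.
From mathcomp Require Import all_boot all_order all_algebra.
From mathcomp Require Import ring zify.
Import GRing.Theory.
Local Open Scope ring_scope.

(* Indices of the
   columns are read in Z/3, so the scheme is invariant under the rotation
   j -> j + 1.  For each row i and each r in Z/3 we use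
     cross i r = (a_ir + b_(r+1)(r+2)) (a_i(r+1) + b_rr)
     corr  i r = (a_ir + a_i(r+2) + b_(r+1)(r+2) + b_(r+1)(r+1) - b_(r+1)r) a_i(r+1)
   and, shared by all rows,  glob r = b_(r+1)(r+2) b_rr;  then
     (AB)_ik = cross i k + cross i (k+1) - corr i k - glob k - glob (k+1). *)

Lemma sum_mulrz_delta {V : zmodType} {I : finType} (F : I -> V) (x : I) :
  \sum_(y : I) F y *~ (y == x)%:Z = F x.
Proof.
rewrite (bigD1 x) //= eqxx mulr1z big1 ?addr0 // => y /negbTE ->.
by rewrite mulr0z.
Qed.

Lemma sum_mulrz_delta_mx (V : zmodType) m p (F : 'I_m -> 'I_p -> V) i j :
  \sum_(i0 < m) \sum_(j0 < p) F i0 j0 *~ delta_mx i j i0 j0 = F i j.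
Proof.
rewrite pair_bigA /=; under eq_bigr => q _ do rewrite mxE natz -xpair_eqE -surjective_pairing.
exact: (sum_mulrz_delta (fun q : 'I_m * 'I_p => F q.1 q.2)).
Qed.

Lemma sum_Z3_rot {V : zmodType} {F : 'I_3 -> V} (k : 'I_3) :
  \sum_(j < 3) F j = F k + F (k + 1) + F (k + 2).
Proof.
rewrite (reindex_inj (addrI k)) !big_ord_recl big_ord0 /= addr0 addrA addr0.
have -> : lift ord0 ord0 = 1 :> 'I_3 by apply/val_inj.
by have -> : lift ord0 (lift ord0 ord0) = 2 :> 'I_3 by apply/val_inj.
Qed.

Definition enum_cast {T : finType} {r : nat} (E : #|T| = r) (t : 'I_r) : T :=
  enum_val (cast_ord (esym E) t).

Lemma sum_enum_cast {V : zmodType} {T : finType} {r : nat} (E : #|T| = r) (F : T -> V) :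
  \sum_(t < r) F (enum_cast E t) = \sum_(x : T) F x.
Proof.
rewrite [RHS](reindex (enum_cast E)) //.
by exists (fun x => cast_ord E (enum_rank x)) => [t _|x _];
  rewrite /enum_cast ?enum_valK ?cast_ordKV // cast_ordK enum_rankK.
Qed.

(* Integer linear forms in the entries of A : 'M_(n, 3) and B : 'M_3 form the
   Z-module of coefficient pairs; va i j and vb j k are the coordinate forms. *)
Definition form (n : nat) : zmodType := ('M[int]_(n, 3) * 'M[int]_3)%type.

Definition va {n : nat} (i : 'I_n) (j : 'I_3) : form n := (delta_mx i j, 0).
Definition vb {n : nat} (j k : 'I_3) : form n := (0, delta_mx j k).

Section Evaluation.
Variables (R : comPzRingType) (n : nat) (A : 'M[R]_(n, 3)) (B : 'M[R]_3).

Definition ev (v : form n) : R := linform A B v.1 v.2.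

Lemma evD (v w : form n) : ev (v + w) = ev v + ev w.
Proof.
rewrite /ev /linform addrACA -!big_split /=; congr (_ + _);
  apply: eq_bigr => x _; rewrite -big_split /=;
  by apply: eq_bigr => y _; rewrite mxE mulrzDr.
Qed.

Lemma evN (v : form n) : ev (- v) = - ev v.
Proof.
rewrite /ev /linform opprD -!sumrN /=; congr (_ + _);
  apply: eq_bigr => x _; rewrite -sumrN;
  by apply: eq_bigr => y _; rewrite mxE mulrNz.
Qed.

Lemma ev_va (i : 'I_n) (j : 'I_3) : ev (va i j) = A i j.
Proof.
rewrite /ev /linform sum_mulrz_delta_mx big1 ?addr0 // => x _.
by rewrite big1 // => y _; rewrite mxE mulr0z.
Qed.

Lemma ev_vb (j k : 'I_3) : ev (vb j k) = B j k.
Proof.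
rewrite /ev /linform sum_mulrz_delta_mx big1 ?add0r // => x _.
by rewrite big1 // => y _; rewrite mxE mulr0z.
Qed.

End Evaluation.

Arguments ev {R n} A B v.

(* It is
   a notation rather than a constant so that unification sees the finite
   sum type directly. *)
Notation product_index n := ('I_n * 'I_3 + 'I_n * 'I_3 + 'I_3)%type.

Definition cross {n : nat} (i : 'I_n) (r : 'I_3) : product_index n := inl (inl (i, r)).
Definition corr {n : nat} (i : 'I_n) (r : 'I_3) : product_index n := inl (inr (i, r)).
Definition glob {n : nat} (r : 'I_3) : product_index n := inr r.

Lemma card_product_index (n : nat) : #|{: product_index n}| = (6 * n + 3)%N.
Proof. rewrite !card_sum !card_prod !card_ord; lia. Qed.

Definition lfactor {n : nat} (t : product_index n) : form n :=
  match t with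
  | inl (inl (i, r)) => va i r + vb (r + 1) (r + 2)
  | inl (inr (i, r)) =>
      va i r + va i (r + 2) + vb (r + 1) (r + 2) + vb (r + 1) (r + 1) - vb (r + 1) r
  | inr r => vb (r + 1) (r + 2)
  end.

Definition rfactor {n : nat} (t : product_index n) : form n :=
  match t with
  | inl (inl (i, r)) => va i (r + 1) + vb r r
  | inl (inr (i, r)) => va i (r + 1)
  | inr r => vb r r
  end.

Definition coef {n : nat} (i : 'I_n) (k : 'I_3) (t : product_index n) : int :=
  (t == cross i k)%:Z + (t == cross i (k + 1))%:Z - (t == corr i k)%:Z
  - (t == glob k)%:Z - (t == glob (k + 1))%:Z.

Lemma Z3_add1_add1 (r : 'I_3) : r + 1 + 1 = r + 2.
Proof. by rewrite -addrA; congr (_ + _); apply/val_inj. Qed.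

Lemma Z3_add1_add2 (r : 'I_3) : r + 1 + 2 = r.
Proof. by rewrite -addrA [1 + 2](_ : _ = 0) ?addr0 //; apply/val_inj. Qed.

Section Scheme.
Variables (R : comPzRingType) (n : nat) (A : 'M[R]_(n, 3)) (B : 'M[R]_3).

Definition product (t : product_index n) : R := ev A B (lfactor t) * ev A B (rfactor t).

Lemma row_identity (i : 'I_n) (k : 'I_3) :
  (A *m B) i k = product (cross i k) + product (cross i (k + 1))
                 - product (corr i k) - product (glob k) - product (glob (k + 1)).
Proof.
rewrite mxE (sum_Z3_rot k) /product /=.
rewrite !(evD, evN, ev_va, ev_vb) Z3_add1_add1 Z3_add1_add2.
ring.
Qed.

Lemma scheme_correct (i : 'I_n) (k : 'I_3) :
  (A *m B) i k = \sum_(t : product_index n) product t *~ coef i k t.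
Proof.
under eq_bigr => t _ do rewrite !(mulrzDr, mulrNz).
by rewrite !(big_split, sumrN) !sum_mulrz_delta row_identity.
Qed.

End Scheme.

Theorem mainTheorem1 (n : nat) (hn : (1 <= n)%N) :
  exists (la : 'I_(6 * n + 3) -> 'I_n -> 'I_3 -> int)
         (lb : 'I_(6 * n + 3) -> 'I_3 -> 'I_3 -> int)
         (ma : 'I_(6 * n + 3) -> 'I_n -> 'I_3 -> int)
         (mb : 'I_(6 * n + 3) -> 'I_3 -> 'I_3 -> int)
         (c : 'I_n -> 'I_3 -> 'I_(6 * n + 3) -> int),
    forall (R : comPzRingType) (A : 'M[R]_(n, 3)) (B : 'M[R]_3)
           (i : 'I_n) (k : 'I_3),
      (A *m B) i k =
      \sum_(t < 6 * n + 3)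
        (linform A B (la t) (lb t) * linform A B (ma t) (mb t)) *~ c i k t.
Proof.
pose h := enum_cast (card_product_index n).
exists (fun t => fun_of_matrix (lfactor (h t)).1), (fun t => fun_of_matrix (lfactor (h t)).2),
       (fun t => fun_of_matrix (rfactor (h t)).1), (fun t => fun_of_matrix (rfactor (h t)).2),
       (fun i k t => coef i k (h t)).
move=> R A B i k.
rewrite scheme_correct -(sum_enum_cast (card_product_index n)).
by apply: eq_bigr => t _.
Qed.
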